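(* Let $\mathfrak a\subset K$ be a fractional $A_{\infty_1}$-ideal having an $\mathbb F_q$-basis $(\alpha_0=1,\alpha_1,\alpha_2,\dots)$ with $1<|\alpha_1|<|\alpha_2|<\cdots$, and let $\Omega_i^{\mathfrak a}(m)=\sum_{(c_0,\dots,c_{i-1})\in\mathbb F_q^i}(c_0+c_1\alpha_1+\dots+c_{i-1}\alpha_{i-1}+\alpha_i)^{-m}$. Put $\hat\zeta^{\mathfrak a}(m)=\sum_{i\ge1}\Omega_i^{\mathfrak a}(m)$. Then for all $n\in\mathbb N$, $n\ge1$, \[|\hat\zeta^{\mathfrak a}(q^n-1)|=|\Omega_1^{\mathfrak a}(q^n-1)|=|\alpha_1|^{q^n(1-q)}<1.\]
   Context: Let $q$ be a prime power, $k=\mathbb F_q(T)$, $A=\mathbb F_q[T]$, $k_\infty=\mathbb F_q((1/T))$ with $|x|=q^{\deg_T x}$. Let $f\in k_\infty\setminus k$ be a root of $X^2-aX-b$ with $a\in A$ monic, $d=\deg_T a\ge1$, $b\in\mathbb F_q^*$, $|f|=q^d$; $K=k(f)\subset k_\infty$ and $A_{\infty_1}=\mathbb F_q[f,fT,\dots,fT^{d-1}]$ is the ring of elements of $K$ regular away from the place induced by $K\subset k_\infty$. (In the paper's normalization, where the $\alpha_i$ are quotients of monic elements, $\hat\zeta^{\mathfrak a}(m)$ equals the zeta sum over monic elements of $\mathfrak a$ minus $1$.) *)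

From HB Require Import structures.
From mathcomp Require Import all_boot all_order all_algebra.
From Stdlib Require Import ClassicalEpsilon.
Set Implicit Arguments. Unset Strict Implicit. Unset Printing Implicit Defensive.
Import Order.TTheory GRing.Theory Num.Theory.
Local Open Scope ring_scope.

Section Laurent.
Variable F : finFieldType.

Definition qF : nat := #|F|.

(* A Laurent series in t = 1/T is represented by a pair (v, s) meaning
   t^v * (s 0 + s 1 t + s 2 t^2 + ...).  Two representations denote the
   same element of k_oo iff they have the same coefficients ([eqLS]). *)
Definition LS := (int * (nat -> F))%type.

(* coefficient of t^n (i.e. of T^(-n)) *)
Definition coef (x : LS) (n : int) : F :=
  match (n - x.1)%R with Posz k => x.2 k | Negz _ => 0 end.

Definition eqLS (x y : LS) : Prop := forall n, coef x n = coef y n.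

Definition constLS (c : F) : LS := (0, fun k => if k == 0%N then c else 0).
Definition zeroLS : LS := constLS 0.
Definition oneLS : LS := constLS 1.

Definition addLS (x y : LS) : LS :=
  let v := Num.min x.1 y.1 in (v, fun k => coef x (v + k%:Z) + coef y (v + k%:Z)).
Definition oppLS (x : LS) : LS := (x.1, fun k => - x.2 k).
Definition mulLS (x y : LS) : LS :=
  (x.1 + y.1, fun k => \sum_(j < k.+1) x.2 j * y.2 (k - j)%N).
Definition powLS (x : LS) (m : nat) : LS := iter m (mulLS x) oneLS.

(* coefficients of the inverse of a unit power series u (u 0 <> 0) *)
Fixpoint invl (u : nat -> F) (k : nat) : seq F :=
  match k with
  | 0 => [:: (u 0%N)^-1]
  | k'.+1 => let l := invl u k' in
      rcons l (- (u 0%N)^-1 * \sum_(j < k'.+1) u j.+1 * nth 0 l (k' - j)%N)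
  end.

(* multiplicative inverse in k_oo (inverse of 0 is 0) *)
Definition invLS (x : LS) : LS :=
  match excluded_middle_informative (exists k, x.2 k != 0) with
  | left h => let k0 := ex_minn h in
              let u := fun j => x.2 (k0 + j)%N in
              (- (x.1 + k0%:Z), fun k => nth 0 (invl u k) k)
  | right _ => zeroLS
  end.

(* |x| = q^(deg_T x) = q^(-(least n with coef x n <> 0)), |0| = 0 *)
Definition absLS (x : LS) : rat :=
  match excluded_middle_informative (exists k, x.2 k != 0) with
  | left h => (qF%:Q) ^ (- (x.1 + (ex_minn h)%:Z))
  | right _ => 0
  end.

(* embedding of A = F[T] into k_oo, T = t^(-1) *)
Definition polyLS (p : {poly F}) : LS :=
  (- (size p)%:Z, fun k => if (k <= size p)%N then p`_(size p - k) else 0).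

Definition ratLS (P R : {poly F}) : LS := mulLS (polyLS P) (invLS (polyLS R)).

Definition in_k (x : LS) : Prop :=
  exists P R : {poly F}, R != 0 /\ eqLS x (ratLS P R).

Definition in_K (f x : LS) : Prop :=
  exists P Q R : {poly F}, R != 0 /\
    eqLS x (mulLS (addLS (polyLS P) (mulLS (polyLS Q) f)) (invLS (polyLS R))).

Inductive in_Ainf (d : nat) (f : LS) : LS -> Prop :=
  | Ainf_const c : in_Ainf d f (constLS c)
  | Ainf_gen i : (i < d)%N -> in_Ainf d f (mulLS f (polyLS 'X^i))
  | Ainf_add x y : in_Ainf d f x -> in_Ainf d f y -> in_Ainf d f (addLS x y)
  | Ainf_mul x y : in_Ainf d f x -> in_Ainf d f y -> in_Ainf d f (mulLS x y)
  | Ainf_eq x y : eqLS x y -> in_Ainf d f x -> in_Ainf d f y.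

(* fractional A_{oo_1}-ideal contained in K (a set of elements of k_oo,
   given as a predicate invariant under equality of series) *)
Definition frac_ideal (d : nat) (f : LS) (I : LS -> Prop) : Prop :=
  [/\ (forall x y, eqLS x y -> I x -> I y),
      (forall x, I x -> in_K f x),
      (I zeroLS /\
      (forall x y, I x -> I y -> I (addLS x y)) /\
      (forall r x, in_Ainf d f r -> I x -> I (mulLS r x))),
      (exists x, I x /\ ~ eqLS x zeroLS) &
      (exists2 e, in_Ainf d f e /\ ~ eqLS e zeroLS &
                 forall x, I x -> in_Ainf d f (mulLS e x))].

Definition lincomb (n : nat) (c : {ffun 'I_n -> F}) (alpha : nat -> LS) : LS :=
  \big[addLS/zeroLS]_(j < n) mulLS (constLS (c j)) (alpha j).

Definition Fq_basis (I : LS -> Prop) (alpha : nat -> LS) : Prop :=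
  [/\ forall i, I (alpha i),
      forall n (c : {ffun 'I_n -> F}),
        eqLS (lincomb c alpha) zeroLS -> forall j, c j = 0 &
      forall x, I x -> exists n (c : {ffun 'I_n -> F}), eqLS x (lincomb c alpha)].

Definition Omega (alpha : nat -> LS) (i m : nat) : LS :=
  \big[addLS/zeroLS]_(c : {ffun 'I_i -> F})
     powLS (invLS (addLS (lincomb c alpha) (alpha i))) m.

Definition series_to (w : nat -> LS) (z : LS) : Prop :=
  forall e : int, exists N, forall M, (N <= M)%N -> forall n : int, n <= e ->
    coef (\big[addLS/zeroLS]_(1 <= i < M.+1) w i) n = coef z n.

End Laurent.

(* Write t = 1/T and let D_i be the degree of alpha_i. Grouping the terms of
   Omega_i according to the coefficient c of alpha_0 = 1, each group is
   sum_c (z + c)^(1-Q) with Q = q^n and z = t^(-D_i) zeta, zeta a unit power series.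
   By the Frobenius, (zeta + c t^D_i)^Q = zeta^Q (1 + c beta) with beta of positive
   valuation, so the group is a partial-fraction sum over
   prod_c (1 + c X) = 1 - X^(q-1); the identities obtained from this product and
   its derivative show that each group has t-valuation exactly D_i Q (q-1).
   Hence |Omega_i| <= |alpha_i|^(Q(1-q)) with equality for i = 1, where there is
   a single group; as the D_i increase, the series converges and its absolute
   value is that of its first term. *)

From HB Require Import structures.
From mathcomp Require Import all_boot all_order all_algebra all_field.
From mathcomp Require Import boolp zify ring.
From Stdlib Require Import ClassicalEpsilon.
Import Order.TTheory GRing.Theory Num.Theory.
Set Implicit Arguments. Unset Strict Implicit. Unset Printing Implicit Defensive.
Local Open Scope ring_scope.

Lemma deriv_prod (R : comNzRingType) (I : eqType) (r : seq I) (f : I -> {poly R}) :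
  uniq r ->
  (\prod_(i <- r) f i)^`() = \sum_(i <- r) (f i)^`() * \prod_(j <- r | j != i) f j.
Proof.
elim: r => [|x r IH] /=; first by rewrite !big_nil derivC.
case/andP=> xr ur; rewrite !big_cons derivM IH // eqxx.
have -> : \prod_(j <- r | j != x) f j = \prod_(j <- r) f j.
  rewrite big_seq_cond [RHS]big_seq; apply: eq_bigl => j.
  by case: eqP => [->|_]; rewrite ?andbF ?(negbTE xr) ?andbT.
rewrite big_distrr /=; congr (_ + _); rewrite !big_seq; apply: eq_bigr => i ir.
by rewrite big_cons ifT 1?mulrCA //; apply: contraNneq xr => ->.
Qed.

Section FfunCons.
Variable T : finType.

Definition ffun_cons i (a : T) (c : {ffun 'I_i -> T}) : {ffun 'I_i.+1 -> T} :=
  [ffun j => if unlift ord0 j is Some j' then c j' else a].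

Lemma ffun_cons0 i a c : @ffun_cons i a c ord0 = a.
Proof. by rewrite ffunE unlift_none. Qed.

Lemma ffun_consS i a c (j : 'I_i) : @ffun_cons i a c (lift ord0 j) = c j.
Proof. by rewrite ffunE liftK. Qed.

Lemma sum_ffunS (V : nmodType) i (G : {ffun 'I_i.+1 -> T} -> V) :
  \sum_c G c = \sum_(c : {ffun 'I_i -> T}) \sum_a G (ffun_cons a c).
Proof.
pose h (p : T * {ffun 'I_i -> T}) := ffun_cons p.1 p.2.
have h_bij : bijective h.
  exists (fun c : {ffun 'I_i.+1 -> T} => (c ord0, [ffun j => c (lift ord0 j)])) => [[a c]|c].
    by rewrite /h ffun_cons0; congr (_, _); apply/ffunP => j; rewrite ffunE ffun_consS.
  by apply/ffunP => j; rewrite ffunE; case: unliftP => [j' ->|->]; rewrite ?ffunE.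
by rewrite (reindex h (onW_bij _ h_bij)) exchange_big pair_big; apply: eq_bigr => -[].
Qed.

End FfunCons.

Definition pser (R : Type) := nat -> R.

Section PowerSeriesRing.
Variable R : comNzRingType.
Implicit Types s u : pser R.

HB.instance Definition _ := Choice.copy (pser R) (nat -> R).

Definition pser_add s u : pser R := fun k => s k + u k.
Definition pser_opp s : pser R := fun k => - s k.
Definition pser_zero : pser R := fun _ => 0.
Definition pser_mul s u : pser R := fun k => \sum_(j < k.+1) s j * u (k - j)%N.
Definition pconst (a : R) : pser R := fun k => if k == 0%N then a else 0.
Definition pser_one : pser R := pconst 1.

Lemma pser_addA : associative pser_add.
Proof. by move=> s u w; apply/funext=> k; rewrite /pser_add addrA. Qed.
Lemma pser_addC : commutative pser_add.
Proof. by move=> s u; apply/funext=> k; rewrite /pser_add addrC. Qed.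
Lemma pser_add0 : left_id pser_zero pser_add.
Proof. by move=> s; apply/funext=> k; rewrite /pser_add add0r. Qed.
Lemma pser_addN : left_inverse pser_zero pser_opp pser_add.
Proof. by move=> s; apply/funext=> k; rewrite /pser_add addNr. Qed.
HB.instance Definition _ :=
  GRing.isZmodule.Build (pser R) pser_addA pser_addC pser_add0 pser_addN.

Definition ptrunc N s : {poly R} := \poly_(i < N) s i.

(* The ring axioms for series are inherited from [{poly R}] through truncations. *)
Lemma pser_mul_trunc N s u k : (k < N)%N -> pser_mul s u k = (ptrunc N s * ptrunc N u)`_k.
Proof.
move=> kN; rewrite coefM; apply: eq_bigr => j _.
have jk : (j <= k)%N by rewrite -ltnS.
by rewrite !coef_poly (leq_ltn_trans jk kN) (leq_ltn_trans (leq_subr _ _) kN).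
Qed.

Lemma pser_mulA : associative pser_mul.
Proof.
move=> s u w; apply/funext=> k; pose t v := ptrunc k.+1 v.
have kN j : (k - j < k.+1)%N by rewrite ltnS leq_subr.
have -> : pser_mul s (pser_mul u w) k = (t s * (t u * t w))`_k.
  rewrite (pser_mul_trunc _ _ (ltnSn k)) !coefM; apply: eq_bigr => j _.
  by rewrite !coef_poly ltn_ord kN (pser_mul_trunc _ _ (kN _)).
have -> : pser_mul (pser_mul s u) w k = (t s * t u * t w)`_k.
  rewrite (pser_mul_trunc _ _ (ltnSn k)) !coefM; apply: eq_bigr => j _.
  by rewrite !coef_poly ltn_ord kN (pser_mul_trunc _ _ (ltn_ord j)).
by rewrite mulrA.
Qed.

Lemma pser_mulC : commutative pser_mul.
Proof. by move=> s u; apply/funext=> k; rewrite !(pser_mul_trunc _ _ (ltnSn k)) mulrC. Qed.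

Lemma pser_mul1 : left_id pser_one pser_mul.
Proof.
move=> s; apply/funext=> k; rewrite /pser_mul big_ord_recl subn0 mul1r.
by rewrite big1 ?addr0 // => j _; rewrite /pser_one /pconst mul0r.
Qed.

Lemma pser_mulDl : left_distributive pser_mul pser_add.
Proof.
move=> s u w; apply/funext=> k; rewrite /pser_mul /pser_add -big_split.
by apply: eq_bigr => j _; rewrite mulrDl.
Qed.

Lemma pser_one_neq0 : pser_one != pser_zero.
Proof. by apply/eqP => /(congr1 (fun s => s 0%N)) /eqP; rewrite oner_eq0. Qed.

HB.instance Definition _ := GRing.Zmodule_isComNzRing.Build (pser R)
  pser_mulA pser_mulC pser_mul1 pser_mulDl pser_one_neq0.

Lemma pser_addE s u k : (s + u) k = s k + u k. Proof. by []. Qed.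
Lemma pser_mulE s u k : (s * u) k = \sum_(j < k.+1) s j * u (k - j)%N.
Proof. by []. Qed.

Lemma pser_sumE I (r : seq I) (P : pred I) (G : I -> pser R) k :
  (\sum_(i <- r | P i) G i) k = \sum_(i <- r | P i) G i k.
Proof. exact: (big_morph (fun s : pser R => s k)). Qed.

Definition pcoef0 s := s 0%N.

Lemma pcoef0_is_nmod_morphism : nmod_morphism pcoef0. Proof. by []. Qed.
Lemma pcoef0_is_monoid_morphism : monoid_morphism pcoef0.
Proof. by split=> // s u; rewrite /pcoef0 pser_mulE big_ord1. Qed.
HB.instance Definition _ :=
  GRing.isNmodMorphism.Build (pser R) R pcoef0 pcoef0_is_nmod_morphism.
HB.instance Definition _ :=
  GRing.isMonoidMorphism.Build (pser R) R pcoef0 pcoef0_is_monoid_morphism.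

Lemma pconstM s a k : (pconst a * s) k = a * s k.
Proof.
rewrite pser_mulE big_ord_recl subn0 /pconst /=.
by rewrite big1 ?addr0 // => j _; rewrite mul0r.
Qed.

Lemma pconst_is_nmod_morphism : nmod_morphism pconst.
Proof.
split=> [|a b]; apply/funext=> k; rewrite /pconst; first by case: eqP.
by rewrite pser_addE; case: eqP; rewrite ?addr0.
Qed.
Lemma pconst_is_monoid_morphism : monoid_morphism pconst.
Proof.
split=> // a b; apply/funext=> k.
by rewrite pconstM /pconst; case: eqP; rewrite ?mulr0.
Qed.
HB.instance Definition _ :=
  GRing.isNmodMorphism.Build R (pser R) pconst pconst_is_nmod_morphism.
HB.instance Definition _ :=
  GRing.isMonoidMorphism.Build R (pser R) pconst pconst_is_monoid_morphism.

Definition tpow (d : nat) : pser R := fun k => if k == d then 1 else 0.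

Lemma tpowM s d k : (tpow d * s) k = if (d <= k)%N then s (k - d)%N else 0.
Proof.
rewrite pser_mulE /tpow; case: leqP => dk.
  rewrite (bigD1 (Ordinal (dk : (d < k.+1)%N))) //= eqxx mul1r big1 ?addr0 //.
  move=> j /eqP nej; case: eqP => [jd|]; last by rewrite mul0r.
  by case: nej; apply: val_inj.
by rewrite big1 // => j _; rewrite ltn_eqF ?mul0r // (leq_trans _ dk).
Qed.

Lemma tpowD d e : tpow (d + e) = tpow d * tpow e.
Proof.
apply/funext=> k; rewrite tpowM /tpow; case: leqP => dk.
  by rewrite -(eqn_add2l d (k - d)) subnKC.
by rewrite ltn_eqF // (leq_trans dk) ?leq_addr.
Qed.

Lemma tpowX d e : tpow d ^+ e = tpow (d * e).
Proof. by elim: e => [|e IH]; rewrite ?muln0 // exprS IH -tpowD mulnS. Qed.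

Lemma pcoef0_tpow d : (0 < d)%N -> pcoef0 (tpow d) = 0.
Proof. by rewrite /pcoef0 /tpow lt0n eq_sym => /negbTE ->. Qed.

End PowerSeriesRing.

Arguments tpow {R}.

Section PowerSeriesUnits.
Variable F : finFieldType.
Implicit Types u : pser F.

Definition pser_invl u : pser F := fun k => nth 0 (invl u k) k.

Lemma size_invl u k : size (invl u k) = k.+1.
Proof. by elim: k => //= k IH; rewrite size_rcons IH. Qed.

Lemma nth_invl u k j : (j <= k)%N -> nth 0 (invl u k) j = pser_invl u j.
Proof.
elim: k => [|k IH]; first by rewrite leqn0 => /eqP ->.
rewrite leq_eqVlt => /predU1P [-> //| jk].
by rewrite /= nth_rcons size_invl jk IH.
Qed.

Lemma pser_invlS u k : pser_invl u k.+1 =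
  - (u 0%N)^-1 * \sum_(j < k.+1) u j.+1 * pser_invl u (k - j)%N.
Proof.
rewrite {1}/pser_invl /= nth_rcons size_invl ltnn eqxx; congr (_ * _).
by apply: eq_bigr => j _; rewrite nth_invl ?leq_subr.
Qed.

Lemma pser_invlK u : u 0%N != 0 -> pser_invl u * u = 1.
Proof.
move=> u0; rewrite mulrC; apply/funext=> -[|k]; rewrite pser_mulE.
  by rewrite big_ord1 mulfV.
rewrite big_ord_recl subn0 pser_invlS mulrA mulrN mulfV // mulN1r addrC.
by apply/eqP; rewrite subr_eq0; apply/eqP/eq_bigr => j _.
Qed.

Definition pser_unit : {pred pser F} := fun u => u 0%N != 0.
(* Non-units are fixed, as the unit-ring interface requires. *)
Definition pser_inv u : pser F := if pser_unit u then pser_invl u else u.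

Lemma pser_mulVr : {in pser_unit, left_inverse 1 pser_inv *%R}.
Proof. by move=> u u0; rewrite /pser_inv (u0 : pser_unit u) pser_invlK. Qed.

Lemma pser_unitPl u v : v * u = 1 -> pser_unit u.
Proof.
move/(congr1 (fun s => s 0%N)); rewrite pser_mulE big_ord1 => vu.
by apply/eqP => u0; move: vu; rewrite u0 mulr0 => /eqP; rewrite eq_sym oner_eq0.
Qed.

Lemma pser_inv_out : {in [predC pser_unit], pser_inv =1 id}.
Proof. by move=> u /negbTE u0; rewrite /pser_inv (u0 : pser_unit u = false). Qed.

HB.instance Definition _ := GRing.ComNzRing_hasMulInverse.Build (pser F)
  pser_mulVr pser_unitPl pser_inv_out.

Lemma pser_unitE u : (u \is a GRing.unit) = (pcoef0 u != 0). Proof. by []. Qed.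

Lemma pser_invE u : u \is a GRing.unit -> u^-1 = pser_invl u.
Proof. by move=> Uu; rewrite /GRing.inv /= /pser_inv (Uu : pser_unit u). Qed.

End PowerSeriesUnits.

Section FiniteField.
Variable F : finFieldType.
Local Notation q := #|F|.

Lemma card_gt1Q : 1 < q%:Q.
Proof. by rewrite ltr1n finNzRing_gt1. Qed.

Lemma natr_card : q%:R = 0 :> F.
Proof.
have [p p_pr pchFp] := finPcharP F.
have k_gt0 : (0 < logn p q)%N.
  by rewrite -(ltn_exp2l _ _ (prime_gt1 p_pr)) -(card_pprimeChar pchFp) finNzRing_gt1.
by rewrite (card_pprimeChar pchFp) natrX (pcharf0 pchFp) expr0n eqn0Ngt k_gt0.
Qed.

Lemma natr_card_pred : q.-1%:R = -1 :> F.
Proof. by apply/eqP; rewrite -addr_eq0 natr1 prednK ?natr_card // ltnW ?finNzRing_gt1. Qed.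

Lemma expf_card_exp (c : F) n : c ^+ (q ^ n) = c.
Proof. by elim: n => [|n IH]; rewrite ?expr1 // expnSr exprM IH expf_card. Qed.

Lemma pser_exprD_card (x y : pser F) n : (x + y) ^+ (q ^ n) = x ^+ (q ^ n) + y ^+ (q ^ n).
Proof.
have [p p_pr pchFp] := finPcharP F.
have pchp : p \in [pchar pser F] := rmorph_pchar (@pconst F) pchFp.
apply: exprDn_pchar; rewrite (eq_pnat _ (pcharf_eq pchp)) (card_pprimeChar pchFp).
by rewrite -expnM pnatX pnat_id.
Qed.

Definition lin (c : F) : {poly F} := 1 + c%:P * 'X.

Lemma prod_XsubC_neq0 : \prod_(c | c != 0) ('X - c%:P) = 'X^(q.-1) - 1 :> {poly F}.
Proof.
apply: (@mulfI _ 'X); first by rewrite polyX_eq0.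
have := finField_genPoly F; rewrite (bigD1 0) //= subr0 => <-.
by rewrite mulrBr mulr1 -exprS prednK // ltnW ?finNzRing_gt1.
Qed.

Lemma prod_lin : \prod_c lin c = 1 - 'X^(q.-1).
Proof.
have lin_neq0 : \prod_(c | c != 0) lin c = (\prod_(c | c != 0) c)%:P * ('X^(q.-1) - 1).
  pose g c : F := - c^-1.
  have inv_inj : injective g by move=> a b /oppr_inj /invr_inj.
  have reindexed : \prod_(c | c != 0) ('X - c%:P) = \prod_(c | c != 0) ('X + c^-1%:P) :> {poly F}.
    rewrite (reindex_inj inv_inj) /=.
    by apply: eq_big => [c|c _]; rewrite /g ?oppr_eq0 ?invr_eq0 // polyCN opprK.
  rewrite -prod_XsubC_neq0 reindexed rmorph_prod -big_split /=; apply: eq_bigr => c c0.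
  by rewrite mulrDr -polyCM mulfV // /lin addrC mulrC.
have wilson : \prod_(c | c != 0) c = -1 :> F.
  move/(congr1 (horner^~ 0)): lin_neq0; rewrite hornerM hornerC horner_prod.
  rewrite big1 => [|c _]; last by rewrite /lin !hornerE.
  rewrite !hornerE expr0n /= -subn1 subn_eq0 leqNgt finNzRing_gt1 sub0r mulrN1.
  by move/eqP; rewrite eq_sym eqr_oppLR => /eqP.
by rewrite (bigD1 0) //= /lin polyC0 mul0r addr0 mul1r lin_neq0 wilson polyCN mulN1r opprB.
Qed.

Lemma sum_scale_prod_lin_omit : \sum_c c%:P * \prod_(j | j != c) lin j = 'X^(q.-2).
Proof.
have := congr1 deriv prod_lin; rewrite deriv_prod ?index_enum_uniq //.
rewrite derivB derivC derivXn sub0r -mulr_natr -(rmorph_nat (@polyC F)) natr_card_pred.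
rewrite rmorphN1 mulrN1 opprK => <-; apply: eq_bigr => c _.
by rewrite /lin derivD derivC add0r deriv_mulC derivX mulr1.
Qed.

Lemma sum_prod_lin_omit : \sum_c \prod_(j | j != c) lin j = - 'X^(q.-1).
Proof.
have : \sum_c lin c * \prod_(j | j != c) lin j = 0.
  rewrite (eq_bigr (fun=> \prod_c lin c)) => [|c _]; last by rewrite [RHS](bigD1 c).
  by rewrite sumr_const -mulr_natr -(rmorph_nat (@polyC F)) natr_card mulr0.
under eq_bigr => c _ do rewrite /lin mulrDl mul1r mulrAC [_ * 'X]mulrC.
rewrite big_split /= -mulr_sumr sum_scale_prod_lin_omit -exprS.
rewrite prednK ?(ltn_predRL, finNzRing_gt1) //.
by move/eqP; rewrite addr_eq0 => /eqP.
Qed.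

End FiniteField.

Section PowerSum.
Variable F : finFieldType.
Local Notation q := #|F|.
Implicit Types zeta : pser F.

Lemma power_sum_translates zeta (d n : nat) :
  zeta \is a GRing.unit -> (0 < d)%N -> (0 < n)%N ->
  exists2 W : pser F, W \is a GRing.unit &
    \sum_c (zeta + pconst c * tpow d) ^- (q ^ n).-1 =
      tpow (d * (1 + (q - 2) * q ^ n)) * W.
Proof.
move=> Uzeta d_gt0 n_gt0; set Q := (q ^ n)%N.
have Q_gt0 : (0 < Q)%N by rewrite expn_gt0 ltnW ?finNzRing_gt1.
pose u c := zeta + pconst c * tpow d.
have Uu c : u c \is a GRing.unit.
  by rewrite pser_unitE rmorphD rmorphM /= pcoef0_tpow // mulr0 addr0 -pser_unitE.
set A := zeta ^+ Q; have UA : A \is a GRing.unit by rewrite unitrX.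
set beta := A^-1 * tpow (d * Q).
have beta0 : pcoef0 beta = 0 by rewrite rmorphM /= pcoef0_tpow ?mulr0 ?muln_gt0 ?d_gt0.
have pconst_beta : commr_rmorph (@pconst F) beta by move=> x; apply: mulrC.
pose ev := horner_morph pconst_beta.
pose g c := ev (lin c).
have gE c : g c = 1 + pconst c * beta.
  by rewrite /g /ev /lin rmorphD rmorphM /= horner_morphX !(horner_morphC pconst_beta) rmorph1.
have Ug (P : pred F) : \prod_(c | P c) g c \is a GRing.unit.
  rewrite pser_unitE rmorph_prod big1 ?oner_eq0 // => c _.
  by rewrite gE rmorphD rmorphM /= beta0 mulr0 addr0 rmorph1.
have Ug1 c : g c \is a GRing.unit by have := Ug (pred1 c); rewrite big_pred1_eq.
(* By the Frobenius, the sum becomes a partial-fraction sum over [\prod_c g c]. *)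
have uQ c : u c ^+ Q = A * g c.
  rewrite pser_exprD_card exprMn tpowX -rmorphXn expf_card_exp gE.
  by rewrite mulrDr mulr1 /beta mulrCA mulVKr.
pose P := \prod_c g c.
have uV c : u c ^- Q.-1 = (A * P)^-1 * (u c * \prod_(j | j != c) g j).
  have -> : u c ^- Q.-1 = u c * (u c ^+ Q)^-1.
    by rewrite -{2}(prednK Q_gt0) exprS invrM ?unitrX // mulrCA mulrV // mulr1.
  have -> : A * P = A * g c * \prod_(j | j != c) g j by rewrite /P (bigD1 c) //= mulrA.
  rewrite invrM ?unitrM ?UA ?Ug ?Ug1 // (uQ c).
  by rewrite [RHS]mulrC [RHS]mulrA mulrK ?Ug.
have sum_omit : \sum_c u c * \prod_(j | j != c) g j =
    tpow d * beta ^+ q.-2 - zeta * beta ^+ q.-1.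
  have evX k : ev 'X^k = beta ^+ k by rewrite /ev rmorphXn /= horner_morphX.
  have sum1 : \sum_c \prod_(j | j != c) g j = - beta ^+ q.-1.
    rewrite -evX /ev -rmorphN -sum_prod_lin_omit rmorph_sum.
    by apply: eq_bigr => c _; rewrite rmorph_prod.
  have sum2 : \sum_c pconst c * \prod_(j | j != c) g j = beta ^+ q.-2.
    rewrite -evX /ev -sum_scale_prod_lin_omit rmorph_sum.
    by apply: eq_bigr => c _; rewrite rmorphM rmorph_prod /= (horner_morphC pconst_beta).
  under eq_bigr => c _ do rewrite mulrDl -mulrA mulrCA.
  by rewrite big_split /= -!mulr_sumr sum1 sum2 mulrN addrC.
have Q_gt1 : (1 < Q)%N by rewrite -{1}(expn0 q) ltn_exp2l ?finNzRing_gt1.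
have q_gt1 := finNzRing_gt1 F.
set e := (d * (1 + (q - 2) * Q))%N.
have betaX k : beta ^+ k = A ^- k * tpow (d * Q * k) by rewrite exprMn tpowX exprVn.
have e1 : (d + d * Q * q.-2 = e)%N.
  by rewrite /e; case: #|F| q_gt1 => [|[|r]] // _; rewrite !subSS subn0 /=; ring.
have e2 : (d * Q * q.-1 = e + d * Q.-1)%N.
  rewrite /e; case: #|F| q_gt1 => [|[|r]] // _; case: (Q) Q_gt1 => [|R] // _.
  by rewrite !subSS subn0 /=; ring.
pose V := A ^- q.-2 - zeta * A ^- q.-1 * tpow (d * Q.-1).
have sum_omitE : tpow d * beta ^+ q.-2 - zeta * beta ^+ q.-1 = tpow e * V.
  by rewrite !betaX e2 -e1 !tpowD /V; ring.
exists ((A * P)^-1 * V).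
  rewrite unitrM unitrV unitrM UA Ug pser_unitE rmorphB rmorphM /= pcoef0_tpow.
    by rewrite mulr0 subr0 -pser_unitE unitrV unitrX.
  by rewrite muln_gt0 d_gt0 ltn_predRL.
by rewrite (eq_bigr _ (fun c _ => uV c)) -mulr_sumr sum_omit sum_omitE mulrCA.
Qed.
End PowerSum.

Section LaurentSeries.
Variable F : finFieldType.
Local Notation q := #|F|.
Implicit Types (x y : LS F) (v : int).

Lemma coefLSE x k : coef x k = if x.1 <= k then x.2 `|k - x.1|%N else 0.
Proof.
rewrite /coef; case E: (k - x.1) => [j|j].
  by rewrite -subr_ge0 E.
by rewrite -subr_ge0 E.
Qed.

Lemma coef_addLS x y k : coef (addLS x y) k = coef x k + coef y k.
Proof.
rewrite [LHS]coefLSE /=; case: ifP => [vk|].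
  by rewrite gez0_abs ?subr_ge0 // addrCA subrr addr0.
by rewrite ge_min => /norP[xk yk]; rewrite !coefLSE (negbTE xk) (negbTE yk) addr0.
Qed.

Lemma coef_zeroLS k : coef (zeroLS F) k = 0.
Proof. by rewrite coefLSE /=; case: ifP => // _; case: eqP. Qed.

Lemma coef_bigLS I (r : seq I) (P : pred I) (G : I -> LS F) k :
  coef (\big[@addLS F/zeroLS F]_(i <- r | P i) G i) k = \sum_(i <- r | P i) coef (G i) k.
Proof.
apply: (big_morph (fun x => coef x k)); last exact: coef_zeroLS.
by move=> x y; apply: coef_addLS.
Qed.

Lemma coef_scaleLS c x k : coef (mulLS (constLS c) x) k = c * coef x k.
Proof.
rewrite !coefLSE /= add0r; case: ifP => _; last by rewrite mulr0.
exact: (pconstM x.2 c).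
Qed.

Lemma coef_oneLS k : coef (oneLS F) k = (k == 0)%:R.
Proof. by rewrite coefLSE subr0; case: k => [[|j]|j]. Qed.

Lemma coef_lincomb m (c : {ffun 'I_m -> F}) (alpha : nat -> LS F) k :
  coef (lincomb c alpha) k = \sum_(j < m) c j * coef (alpha j) k.
Proof. by rewrite coef_bigLS; apply: eq_bigr => j _; rewrite coef_scaleLS. Qed.

Lemma powLS_pair v (s : pser F) m : powLS (v, s) m = (m%:Z * v, s ^+ m).
Proof.
elim: m => [|m IH]; first by rewrite mul0r.
by rewrite /powLS iterS -/(powLS _ m) IH /mulLS /= exprS intS mulrDl mul1r.
Qed.

Lemma big_addLS_pair I (r : seq I) (s : I -> pser F) v :
  eqLS (\big[@addLS F/zeroLS F]_(i <- r) (v, s i)) (v, \sum_(i <- r) s i).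
Proof.
move=> k; rewrite coef_bigLS coefLSE /= pser_sumE.
case: ifP => vk; last by rewrite big1 // => i _; rewrite coefLSE /= vk.
by apply: eq_bigr => i _; rewrite coefLSE /= vk.
Qed.

Definition has_val x v := (forall k, k < v -> coef x k = 0) /\ coef x v != 0.

Lemma has_val_eq_coef x y v :
  (forall k, k <= v -> coef x k = coef y k) -> has_val x v -> has_val y v.
Proof.
move=> xy [low xv]; split; last by rewrite -xy.
by move=> k lt_k; rewrite -xy ?low ?ltW.
Qed.

Lemma has_val_inj x v w : has_val x v -> has_val x w -> v = w.
Proof.
move=> [lowv xv] [loww xw]; apply/eqP; rewrite eq_le !leNgt; apply/andP; split.
  by apply: contra xw => /lowv ->.
by apply: contra xv => /loww ->.
Qed.

Lemma has_val_ex_minn x (h : exists k, x.2 k != 0) : has_val x (x.1 + (ex_minn h)%:Z).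
Proof.
case: ex_minnP => k0 xk0 min_k0; split; last by rewrite coefLSE lerDl addrAC subrr add0r.
move=> k lt_k; rewrite coefLSE; case: ifP => // le_k; apply/eqP; apply: contraTT lt_k.
by move/min_k0; rewrite -leNgt -lez_nat gez0_abs ?subr_ge0 // lerBrDl.
Qed.

Lemma has_val_nz x v : has_val x v -> exists k, x.2 k != 0.
Proof. by case=> _; rewrite coefLSE; case: ifP => _; [exists `|v - x.1|%N | rewrite eqxx]. Qed.

Lemma absLS_val x v : has_val x v -> absLS x = q%:Q ^ (- v).
Proof.
move=> xv; rewrite /absLS; case: excluded_middle_informative => [h|[]]; last exact: has_val_nz xv.
by rewrite (has_val_inj (has_val_ex_minn h) xv).
Qed.

Definition shiftLS x v : pser F := fun j => coef x (v + j%:Z).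

Lemma invLS_val x v : has_val x v -> invLS x = (- v, (shiftLS x v)^-1).
Proof.
move=> xv; rewrite /invLS; case: excluded_middle_informative => [h|[]]; last exact: has_val_nz xv.
have <- := has_val_inj (has_val_ex_minn h) xv.
rewrite pser_invE; last by rewrite pser_unitE /pcoef0 /shiftLS addr0 (has_val_inj (has_val_ex_minn h) xv); case: xv.
congr (_, pser_invl _); apply/funext => j.
by rewrite /shiftLS coefLSE -addrA lerDl addrAC subrr add0r -PoszD.
Qed.

Definition valLS x : int :=
  match excluded_middle_informative (exists k, x.2 k != 0) with
  | left h => x.1 + (ex_minn h)%:Z
  | right _ => 0
  end.

Lemma has_val_valLS x : absLS x != 0 -> has_val x (valLS x).
Proof.
rewrite /absLS /valLS; case: excluded_middle_informative => [h _|_]; last by rewrite eqxx.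
exact: has_val_ex_minn.
Qed.

Lemma has_val_tpowM v (e : nat) (W : pser F) :
  W \is a GRing.unit -> has_val (v, tpow e * W) (v + e%:Z).
Proof.
move=> UW; split=> [k lt_k|]; last by rewrite coefLSE lerDl /= addrAC subrr add0r tpowM leqnn subnn.
rewrite coefLSE /=; case: ifP => // le_k; rewrite tpowM ifF //; apply/negbTE.
by rewrite -ltnNge -ltz_nat gez0_abs ?subr_ge0 // ltrBlDl.
Qed.

Lemma has_val_sum_translates (n d : nat) (z : LS F) (y : F -> LS F) :
  (0 < d)%N -> (0 < n)%N -> has_val z (- d%:Z) ->
  (forall a k, coef (y a) k = coef z k + (k == 0)%:R * a) ->
  has_val (\big[@addLS F/zeroLS F]_a powLS (invLS (y a)) (q ^ n).-1)
          (d * q ^ n * q.-1)%N.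
Proof.
move=> d_gt0 n_gt0 [z_low z_val] yE; set m := (q ^ n).-1.
pose zeta := shiftLS z (- d%:Z).
have Uzeta : zeta \is a GRing.unit by rewrite pser_unitE /pcoef0 /zeta /shiftLS addr0.
have [W UW sumW] := power_sum_translates Uzeta d_gt0 n_gt0.
have d_neq0 : (- d%:Z == 0) = false by rewrite oppr_eq0 eqz_nat eqn0Ngt d_gt0.
have y_val a : has_val (y a) (- d%:Z).
  split=> [k lt_k|]; last by rewrite yE d_neq0 mul0r addr0.
  rewrite yE z_low // (lt_eqF (lt_trans lt_k _)) ?mul0r ?addr0 //.
  by rewrite oppr_lt0 ltz_nat.
have shift_y a : shiftLS (y a) (- d%:Z) = zeta + pconst a * tpow d.
  apply/funext => j; rewrite /shiftLS yE pser_addE pconstM /tpow.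
  have -> : (- d%:Z + j%:Z == 0) = (j == d) by rewrite addrC subr_eq0 eqz_nat.
  by case: eqP; rewrite ?mulr1 ?mulr0 ?mul1r ?mul0r.
have termE a : powLS (invLS (y a)) m = (m%:Z * d%:Z, (zeta + pconst a * tpow d) ^- m).
  by rewrite (invLS_val (y_val a)) powLS_pair opprK shift_y exprVn.
rewrite (eq_bigr _ (fun a _ => termE a)).
apply: (has_val_eq_coef (fun k _ => esym (big_addLS_pair _ _ _ k))).
rewrite sumW; set e := (d * _)%N.
have -> : (d * q ^ n * q.-1)%N = (m * d + e)%N.
  rewrite /m /e; have q_gt1 := finNzRing_gt1 F.
  have Q_gt0 : (0 < q ^ n)%N by rewrite expn_gt0 ltnW.
  case: #|F| q_gt1 Q_gt0 => [|[|r]] // _; case: (_ ^ n)%N => [|Q] // _.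
  by rewrite !subSS subn0 /=; ring.
by rewrite PoszD PoszM; apply: has_val_tpowM.
Qed.
End LaurentSeries.

Section Omega.
Variable F : finFieldType.
Local Notation q := #|F|.
Variables (alpha : nat -> LS F) (n : nat).
Hypotheses (alpha0 : eqLS (alpha 0%N) (oneLS F)) (alpha1 : 1 < absLS (alpha 1%N))
  (alpha_incr : forall i, (0 < i)%N -> absLS (alpha i) < absLS (alpha i.+1))
  (n_gt0 : (0 < n)%N).
Local Notation m := (q ^ n).-1.

Lemma absLS_alpha_gt1 i : (0 < i)%N -> 1 < absLS (alpha i).
Proof.
elim: i => // -[_ _ //|i] IH _.
exact: lt_trans (IH isT) (alpha_incr _).
Qed.

Definition deg i := - valLS (alpha i).

Lemma has_val_alpha i : (0 < i)%N -> has_val (alpha i) (- deg i).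
Proof.
move=> i_gt0; rewrite opprK; apply: has_val_valLS.
by rewrite gt_eqF // (lt_trans _ (absLS_alpha_gt1 i_gt0)).
Qed.

Lemma absLS_alpha i : (0 < i)%N -> absLS (alpha i) = q%:Q ^ deg i.
Proof. by move/has_val_alpha/absLS_val; rewrite opprK. Qed.

Lemma deg_gt0 i : (0 < i)%N -> 0 < deg i.
Proof.
move=> i_gt0; have := absLS_alpha_gt1 i_gt0.
by rewrite absLS_alpha // -(expr0z q%:Q) (ltr_eXz2l (card_gt1Q F)).
Qed.

Lemma deg_ltS i : (0 < i)%N -> deg i < deg i.+1.
Proof.
by move=> i_gt0; have := alpha_incr i_gt0; rewrite !absLS_alpha // (ltr_eXz2l (card_gt1Q F)).
Qed.

Lemma deg_lt j i : (0 < j)%N -> (j < i)%N -> deg j < deg i.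
Proof.
move=> j_gt0; elim: i => // i IH; rewrite ltnS leq_eqVlt => /predU1P[<-|lt_ji].
  exact: deg_ltS.
exact: lt_trans (IH lt_ji) (deg_ltS (leq_trans j_gt0 (ltnW lt_ji))).
Qed.

Lemma deg_ge i : (0 < i)%N -> i%:Z <= deg i.
Proof.
elim: i => // -[_ _|i IH _]; first exact: deg_gt0.
by have := deg_ltS (ltn0Sn i); have := IH isT; rewrite !intS; lia.
Qed.

Definition Omega_val i : int := deg i * ((q ^ n)%:Z * (q%:Z - 1)).

(* The terms of [Omega alpha i.+1 m] with given coefficients of [alpha 1], ...,
   [alpha i], summed over the coefficient of [alpha 0 = 1]. *)
Definition Omega_fiber i (c : {ffun 'I_i -> F}) : LS F :=
  \big[@addLS F/zeroLS F]_a
     powLS (invLS (addLS (lincomb (ffun_cons a c) alpha) (alpha i.+1))) m.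

Lemma coef_Omega i k :
  coef (Omega alpha i.+1 m) k = \sum_(c : {ffun 'I_i -> F}) coef (Omega_fiber c) k.
Proof. by rewrite coef_bigLS sum_ffunS; apply: eq_bigr => c _; rewrite coef_bigLS. Qed.

Lemma has_val_Omega_fiber i (c : {ffun 'I_i -> F}) : has_val (Omega_fiber c) (Omega_val i.+1).
Proof.
pose d := `|deg i.+1|%N.
have dE : d%:Z = deg i.+1 by rewrite gez0_abs // ltW // deg_gt0.
pose z := addLS (lincomb c (fun j => alpha j.+1)) (alpha i.+1).
have [low_i val_i] := has_val_alpha (ltn0Sn i).
have low_j k (j : 'I_i) : k <= - deg i.+1 -> coef (alpha j.+1) k = 0.
  move=> le_k; have [low_j _] := has_val_alpha (ltn0Sn j).
  apply: low_j; apply: le_lt_trans le_k _.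
  by rewrite ltrN2; apply: deg_lt; rewrite ?ltnS.
have z_val : has_val z (- d%:Z).
  have lincomb_low k : k <= - deg i.+1 -> coef (lincomb c (fun j => alpha j.+1)) k = 0.
    by move=> le_k; rewrite coef_lincomb big1 // => j _; rewrite low_j ?mulr0.
  rewrite dE; split; last by rewrite coef_addLS lincomb_low ?add0r.
  by move=> k lt_k; rewrite coef_addLS lincomb_low ?low_i ?add0r // ltW.
have d_gt0 : (0 < d)%N by rewrite -ltz_nat dE deg_gt0.
have yE a k : coef (addLS (lincomb (ffun_cons a c) alpha) (alpha i.+1)) k =
    coef z k + (k == 0)%:R * a.
  rewrite !coef_addLS !coef_lincomb big_ord_recl ffun_cons0 alpha0 coef_oneLS.
  under eq_bigr => j _ do rewrite ffun_consS.
  by rewrite [a * _]mulrC -addrA addrC.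
have := has_val_sum_translates d_gt0 n_gt0 z_val yE.
rewrite /Omega_val -dE !PoszM predn_int ?mulrA //.
exact/ltnW/finNzRing_gt1.
Qed.

Lemma coef_Omega_lt i k : (0 < i)%N -> k < Omega_val i -> coef (Omega alpha i m) k = 0.
Proof.
case: i => // i _ lt_k; rewrite coef_Omega big1 // => c _.
by case: (has_val_Omega_fiber c) => /(_ k lt_k).
Qed.

Lemma has_val_Omega1 : has_val (Omega alpha 1 m) (Omega_val 1).
Proof.
apply: (has_val_eq_coef _ (has_val_Omega_fiber [ffun=> 0])) => k _.
rewrite coef_Omega (big_pred1 [ffun=> 0]) // => c.
by apply/esym/eqP/ffunP => -[].
Qed.

Lemma Omega_scale_ge1 : 1 <= (q ^ n)%:Z * (q%:Z - 1).
Proof.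
have q_gt1 : 1 < q%:Z by rewrite ltz_nat finNzRing_gt1.
have Q_ge1 : 1 <= (q ^ n)%:Z by rewrite lez_nat expn_gt0 ltnW ?finNzRing_gt1.
nia.
Qed.

Lemma Omega_val_ge i : (0 < i)%N -> i%:Z <= Omega_val i.
Proof. by move/deg_ge; have := Omega_scale_ge1; rewrite /Omega_val; nia. Qed.

Lemma Omega_val_lt i : (1 < i)%N -> Omega_val 1 < Omega_val i.
Proof. by move=> i_gt1; rewrite ltr_pM2r ?deg_lt // (lt_le_trans ltr01 Omega_scale_ge1). Qed.

Lemma coef_Omega_small i k : (0 < i)%N -> k < i%:Z -> coef (Omega alpha i m) k = 0.
Proof. by move=> i_gt0 lt_k; rewrite coef_Omega_lt // (lt_le_trans lt_k) ?Omega_val_ge. Qed.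

(* [Omega alpha i m] has no coefficient of index below [i], so every coefficient
   of the limit is a finite sum. *)
Definition zeta_hat : LS F :=
  (0, fun j => \sum_(1 <= i < j.+1) coef (Omega alpha i m) j%:Z).

Lemma series_to_zeta_hat : series_to (fun i => Omega alpha i m) zeta_hat.
Proof.
move=> e; exists `|e|%N => M le_eM k le_ke; rewrite coef_bigLS coefLSE /=.
case: ifP => [k_ge0|k_lt0]; last first.
  rewrite big1_seq // => i /andP[_]; rewrite mem_index_iota => /andP[i_gt0 _].
  by rewrite coef_Omega_small //; move/negbT: k_lt0; lia.
rewrite subr0 gez0_abs // (big_cat_nat _ (n := `|k|.+1)) //=; last first.
  by rewrite ltnS (leq_trans _ le_eM) // -lez_nat !gez0_abs // (le_trans k_ge0).
rewrite [X in _ + X]big1_seq ?addr0 // => i /andP[_]; rewrite mem_index_iota => /andP[lt_ki _].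
by rewrite coef_Omega_small ?(leq_trans _ lt_ki) // -(gez0_abs k_ge0) ltz_nat.
Qed.

Lemma has_val_series_limit z :
  series_to (fun i => Omega alpha i m) z -> has_val z (Omega_val 1).
Proof.
move=> /(_ (Omega_val 1)) [N conv_z]; apply: (has_val_eq_coef _ has_val_Omega1) => k le_k.
rewrite -(conv_z (maxn N 1)) ?leq_maxl // coef_bigLS big_ltn ?ltnS ?leq_maxr //.
rewrite big1_seq ?addr0 // => i /andP[_]; rewrite mem_index_iota => /andP[lt_1i _].
exact: coef_Omega_lt (ltnW lt_1i) (le_lt_trans le_k (Omega_val_lt lt_1i)).
Qed.

Lemma absLS_Omega1 :
  absLS (Omega alpha 1 m) = absLS (alpha 1%N) ^ ((q ^ n)%:Z * (1 - q%:Z)).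
Proof. by rewrite (absLS_val has_val_Omega1) absLS_alpha // exprz_exp -!mulrN opprB. Qed.

Lemma absLS_Omega1_lt1 : absLS (Omega alpha 1 m) < 1.
Proof.
rewrite (absLS_val has_val_Omega1) -(expr0z q%:Q) (ltr_eXz2l (card_gt1Q F)) oppr_lt0.
exact: lt_le_trans (Omega_val_ge (ltn0Sn 0)).
Qed.

End Omega.

Theorem corollary1 (F : finFieldType) (a : {poly F}) (b : F) (f : LS F)
  (I : LS F -> Prop) (alpha : nat -> LS F) (n : nat) :
  a \is monic -> (1 < size a)%N -> b != 0 ->
  eqLS (mulLS f f) (addLS (mulLS (polyLS a) f) (constLS b)) ->
  ~ in_k f ->
  absLS f = (qF F)%:Q ^+ (size a).-1 ->
  frac_ideal (size a).-1 f I ->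
  Fq_basis I alpha ->
  eqLS (alpha 0%N) (oneLS F) ->
  1 < absLS (alpha 1%N) ->
  (forall i, (0 < i)%N -> absLS (alpha i) < absLS (alpha i.+1)) ->
  (1 <= n)%N ->
  let m := (qF F ^ n).-1 in
  (exists z, series_to (fun i => Omega alpha i m) z) /\
  (forall z, series_to (fun i => Omega alpha i m) z ->
     [/\ absLS z = absLS (Omega alpha 1 m),
         absLS (Omega alpha 1 m) =
           absLS (alpha 1%N) ^ ((qF F ^ n)%:Z * (1 - (qF F)%:Z)) &
         absLS (Omega alpha 1 m) < 1]).
Proof.
(* Only the normalisation and the growth of the basis matter. *)
move=> _ _ _ _ _ _ _ _ alpha0 alpha1 alpha_incr n_gt0 m.
split; first by exists (zeta_hat alpha n); apply: series_to_zeta_hat.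
move=> z conv_z; split; last exact: absLS_Omega1_lt1.
- have val_z := has_val_series_limit alpha0 alpha1 alpha_incr n_gt0 conv_z.
  have val_1 := has_val_Omega1 alpha0 alpha1 alpha_incr n_gt0.
  by rewrite (absLS_val val_z) (absLS_val val_1).
- exact: absLS_Omega1.
Qed.
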